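(* Let $G=(V,E)$ be a finite simple graph and let $T\geq1$ be an integer. For each zero forcing set $C$ that is the initial set of a zero forcing game in $\mathcal{Z}(G,T)$, there is a feasible solution $(s,x,y,z)$ of the Infection Model $\mathrm{IM}(G,T)$ such that $|C|=\sum_{v\in V}s_v$ and $z=\mathrm{pt}(G,C)\leq T$.
   Context: Zero forcing: $n=|V|$, $N(u)$ is the neighborhood of $u$. Under the standard color change rule, a filled vertex $u$ can force a non-filled vertex $v$ if $v$ is the only non-filled neighbor of $u$. A zero forcing game on $G$ with initial set $C\subseteq V$ consists of sets $C^{(0)}=C^{[0]}=C$, sets $C^{(t)}$ (vertices forced at time step $t$) with $C^{[t]}=C^{[t-1]}\cup C^{(t)}$ for $t\geq1$, and a collection $\phi(C)$ of forces $u\to v$, such that every vertex lies in exactly one set $C^{(t)}$, and each $v\in C^{(t)}$ with $t\geq 1$ is forced by exactly one neighbor $u$ (recorded as $u\to v$ in $\phi(C)$) such that $u$ and all neighbors of $u$ other than $v$ lie in $C^{[t-1]}$. The closure of $C$ is the set of filled vertices once no more forces are possible; $C$ is a zero forcing set if its closure is $V$. The propagation time $\mathrm{pt}(G,C)$ is the smallest $t^*$ with $C^{[t^*]}=V$ when at each time step all possible forces are applied simultaneously (i.e. $C^{(t)}$ is the set of all $v\notin C^{[t-1]}$ for which some $u\in C^{[t-1]}$ has $v$ as its unique neighbor outside $C^{[t-1]}$), and $\mathrm{pt}(G,C)=\infty$ if $C$ is not a zero forcing set. $\mathcal{Z}(G,T)$ denotes the family of all zero forcing games on $G$ whose initial set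 is a zero forcing set and which use at most $T$ time steps. Infection Model: let $A$ be the set of arcs containing both $(u,v)$ and $(v,u)$ for each edge $\{u,v\}\in E$. The model $\mathrm{IM}(G,T)$ has variables $s_v\in\{0,1\}$ and $x_v\in\{0,1,\dots,T\}$ for $v\in V$, $y_a\in\{0,1\}$ for $a\in A$, and $z\in\{0,1,\dots,T\}$, subject to: (i) $s_v+\sum_{a=(u,v)\in A}y_a=1$ for all $v\in V$; (ii) $x_u-x_v+(T+1)y_a\leq T$ for all $a=(u,v)\in A$; (iii) $x_w-x_v+(T+1)y_a\leq T$ for all $a=(u,v)\in A$ and $w\in N(u)\setminus\{v\}$; (iv) $x_v-z\leq 0$ for all $v\in V$. A feasible solution is one satisfying all these constraints. *)

From mathcomp Require Import all_boot all_order all_algebra.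
Set Implicit Arguments. Unset Strict Implicit. Unset Printing Implicit Defensive.
Import Order.TTheory GRing.Theory Num.Theory.

Definition simple_graph (V : finType) (e : rel V) : Prop :=
  symmetric e /\ irreflexive e.

Definition force_step (V : finType) (e : rel V) (S : {set V}) : {set V} :=
  S :|: [set v | (v \notin S) &&
                 [exists u, [&& u \in S, e u v &
                   [forall w, (e u w && (w != v)) ==> (w \in S)]]]].

Definition filled_at (V : finType) (e : rel V) (C : {set V}) (t : nat) : {set V} :=
  iter t (force_step e) C.

Definition zero_forcing_set (V : finType) (e : rel V) (C : {set V}) : Prop :=
  exists t, filled_at e C t = setT.

(* pt(G,C) = t  (t is the least time with C^{[t]} = V); if C is not a zero
   forcing set, no finite t satisfies this (pt = infinity). *)
Definition is_prop_time (V : finType) (e : rel V) (C : {set V}) (t : nat) : Prop :=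
  filled_at e C t = setT /\ forall t', t' < t -> filled_at e C t' != setT.

(* A zero forcing game with initial set C using at most T time steps.
   time v = the unique t with v \in C^{(t)}; forcer v = the u with u -> v
   in phi(C) (meaningful when time v >= 1).  C^{[t-1]} = {w | time w < t}. *)
Definition zf_game (V : finType) (e : rel V) (C : {set V}) (T : nat)
    (time : V -> nat) (forcer : V -> V) : Prop :=
  (forall v, (v \in C) = (time v == 0%N)) /\
  (forall v, time v <= T) /\
  (forall v, 0 < time v ->
     [/\ e (forcer v) v, time (forcer v) < time v &
         forall w, e (forcer v) w -> w != v -> time w < time v]).

Definition in_ZGT (V : finType) (e : rel V) (T : nat) (C : {set V}) : Prop :=
  zero_forcing_set e C /\ exists time forcer, zf_game e C T time forcer.

Local Open Scope ring_scope.

(* Feasibility for IM(G,T).  Arcs A = {(u,v) | e u v}; y is given on all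
   pairs but only its values on arcs are constrained/used. *)
Definition IM_feasible (V : finType) (e : rel V) (T : nat)
    (s : V -> int) (x : V -> int) (y : V -> V -> int) (z : int) : Prop :=
  (forall v, s v = 0 \/ s v = 1) /\
  (forall v, 0 <= x v <= T%:Z) /\
  (forall u v, e u v -> y u v = 0 \/ y u v = 1) /\
  (0 <= z <= T%:Z) /\
  (forall v, s v + \sum_(u | e u v) y u v = 1) /\
  (forall u v, e u v -> x u - x v + (T%:Z + 1) * y u v <= T%:Z) /\
  (forall u v w, e u v -> e u w -> w != v ->
     x w - x v + (T%:Z + 1) * y u v <= T%:Z) /\
  (forall v, x v - z <= 0).

From mathcomp Require Import all_boot all_order all_algebra.
From mathcomp Require Import zify.
Import Order.TTheory GRing.Theory Num.Theory.
Set Implicit Arguments. Unset Strict Implicit.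
Local Open Scope ring_scope.

(* Any zero forcing game from C finishing within T steps is dominated by the
   simultaneous one, so the latter fills V by time T and pt(G,C) <= T.  The
   simultaneous game, with each vertex's filling time and one chosen forcer,
   is itself a zero forcing game lasting pt(G,C) steps.  Setting s = [v in C],
   x_v = time of v, y_(u,v) = [u forces v] and z = pt(G,C) then satisfies the
   model: the big-M constraints are active only on forcing arcs, where they
   say exactly that the forcer and its other neighbours were filled earlier. *)

Section ZeroForcing.

Variables (V : finType) (e : rel V).

Lemma filled_atS C t : filled_at e C t.+1 = force_step e (filled_at e C t).
Proof. by rewrite /filled_at iterS. Qed.

Lemma filled_at_mono C :
  {homo filled_at e C : t t' / (t <= t')%N >-> t \subset t'}.
Proof.
move=> t t' /subnK <-; elim: (t' - t)%N => [|k IHk] //=.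
exact: subset_trans IHk (subsetUl _ _).
Qed.

Lemma forced_at C t v :
    v \in filled_at e C t.+1 -> v \notin filled_at e C t ->
  exists u, [/\ u \in filled_at e C t, e u v &
                forall w, e u w -> w != v -> w \in filled_at e C t].
Proof.
rewrite filled_atS /force_step !inE => /orP[-> //|/andP[_ /existsP[u]]].
case/and3P=> uS euv /forallP uN _; exists u; split=> // w euw wv.
by have /implyP := uN w; apply; rewrite euw wv.
Qed.

Lemma zf_game_filled C T time forcer : zf_game e C T time forcer ->
  forall t v, (time v <= t)%N -> v \in filled_at e C t.
Proof.
case=> C0 [_ forceP]; elim=> [|t IHt] v; first by rewrite leqn0 -C0.
rewrite leq_eqVlt ltnS => /predU1P[tv|]; last first.
  by move/IHt; apply/subsetP/filled_at_mono.
have := forceP v; rewrite tv => /(_ isT)[euv ltu ltN].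
rewrite filled_atS /force_step !inE; case: (boolP (v \in _)) => //= _.
apply/existsP; exists (forcer v); rewrite euv IHt //=.
by apply/forallP => w; apply/implyP => /andP[euw wv]; apply/IHt/ltN.
Qed.

Lemma zf_game_fills C T time forcer :
  zf_game e C T time forcer -> filled_at e C T = setT.
Proof.
move=> game; apply/setP => v; rewrite inE (zf_game_filled game) //.
by case: game => _ [].
Qed.

Lemma prop_time_exists C T : filled_at e C T = setT ->
  exists2 pt, is_prop_time e C pt & (pt <= T)%N.
Proof.
move=> fullT; have fullE : exists t, filled_at e C t == setT.
  by exists T; rewrite fullT.
case: (ex_minnP fullE) => pt /eqP fullpt ptmin.
exists pt; last by rewrite ptmin ?fullT.
split=> // t ltt; apply/eqP => fullt.
by have := ptmin t; rewrite fullt eqxx leqNgt ltt => /(_ isT).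
Qed.

Lemma fill_time_exists C T : filled_at e C T = setT ->
  exists2 time : V -> nat, forall v t, (v \in filled_at e C t) = (time v <= t)%N
    & forall v, (time v <= T)%N.
Proof.
move=> fullT; have filledE v : exists t, v \in filled_at e C t.
  by exists T; rewrite fullT inE.
exists (fun v => ex_minn (filledE v)) => [v t|v];
  case: (ex_minnP (filledE v)) => m vm mmin.
  by apply/idP/idP => [/mmin //|/filled_at_mono/subsetP]; apply.
by rewrite mmin ?fullT ?inE.
Qed.

Lemma simultaneous_zf_game C T : filled_at e C T = setT ->
  exists time forcer, zf_game e C T time forcer.
Proof.
move=> /fill_time_exists[time timeE timeT].
have forcerE v : exists u, (0 < time v)%N ->
    [/\ e u v, (time u < time v)%N &
        forall w, e u w -> w != v -> (time w < time v)%N].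
  case tv: (time v) => [|t]; first by exists v.
  have := @forced_at C t v; rewrite !timeE tv leqnn ltnn => /(_ isT isT).
  case=> u [ut euv uN]; exists u => _; split=> [//||w euw wv]; first by rewrite ltnS -timeE.
  by rewrite ltnS -timeE; apply: uN.
have [forcer forcerP] := fin_all_exists forcerE.
exists time, forcer; split; last by split.
by move=> v; rewrite -leqn0 -timeE /filled_at.
Qed.

End ZeroForcing.

Lemma card_sum_indicator (T : finType) (A : {set T}) :
  #|A|%:Z = \sum_(v : T) (v \in A : nat)%:Z.
Proof.
rewrite -sum1_card big_mkcond (big_morph Posz PoszD (erefl _)) /=.
by apply: eq_bigr => v _; case: (v \in A).
Qed.

Lemma big_M_constraint (T a b : nat) (c : bool) :
    (a <= T)%N -> (b <= T)%N -> (c -> a < b)%N ->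
  a%:Z - b%:Z + (T%:Z + 1) * (c : nat)%:Z <= T%:Z.
Proof. by case: c => /= aT bT ltab; [have := ltab isT|]; lia. Qed.

Lemma zf_game_IM_feasible (V : finType) (e : rel V) C t T time forcer :
    zf_game e C t time forcer -> (t <= T)%N ->
  IM_feasible e T (fun v => (v \in C : nat)%:Z) (fun v => (time v)%:Z)
    (fun u v => ((v \notin C) && (u == forcer v) : nat)%:Z) t%:Z.
Proof.
move=> [C0 [timet forceP]] tT.
have timeT v : (time v <= T)%N by apply: leq_trans tT.
have forcedP v : v \notin C ->
    [/\ e (forcer v) v, (time (forcer v) < time v)%N
       & forall w, e (forcer v) w -> w != v -> (time w < time v)%N].
  by rewrite C0 -lt0n; apply: forceP.
split; first by move=> v; case: (v \in C); [right|left].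
split; first by move=> v; have := timeT v; lia.
split; first by move=> u v _; case: (_ && _); [right|left].
split; first lia.
split.
  move=> v; case: (boolP (v \in C)) => vC /=.
    by rewrite big1 ?addr0 // => u _; rewrite vC.
  have [ev _ _] := forcedP v vC.
  by rewrite (bigD1 (forcer v)) //= eqxx big1 ?addr0 // => u /andP[_ /negbTE->].
split.
  move=> u v _; apply: big_M_constraint => // /andP[vC /eqP->].
  by case: (forcedP v vC).
split.
  move=> u v w _ euw wv; apply: big_M_constraint => // /andP[vC /eqP ufv].
  by case: (forcedP v vC) => _ _; apply; rewrite -?ufv.
by move=> v; have := timet v; lia.
Qed.

Theorem theorem3p2 (V : finType) (e : rel V) (T : nat) (C : {set V}) :
  simple_graph e -> (1 <= T)%N -> in_ZGT e T C ->
  exists (s x : V -> int) (y : V -> V -> int) (z : int),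
    [/\ IM_feasible e T s x y z,
        (#|C|)%:Z = \sum_(v : V) s v &
        exists pt : nat, [/\ is_prop_time e C pt, z = pt%:Z & (pt <= T)%N]].
Proof.
move=> _ _ [_ [time0 [forcer0 game0]]].
have [pt ptP ptT] := prop_time_exists (zf_game_fills game0).
have [time [forcer game]] := simultaneous_zf_game (proj1 ptP).
do 4 eexists; split.
- exact: zf_game_IM_feasible game ptT.
- exact: card_sum_indicator.
- by exists pt.
Qed.
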